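(* Let $G$ be a countable even-by-quotient abelian group with $\dim_{\mathbb Q}(G\otimes\mathbb Q)<\infty$, and let $H$ be the subgroup generated by a maximal independent system of elements of infinite order of $G$. Then the exact sequence \[0\to H\overset{i}{\to}G\overset{\pi}{\to}G/H\to0\] is coarsely split.
   Context: A set of nonzero elements $\{x_j\}$ of an abelian group is independent if $\sum n_jx_j=0$ implies $n_jx_j=0$ for all $j$. A countable abelian group $G$ is even-by-quotient if, for $H$ the subgroup generated by a maximal independent system of elements of infinite order, every element of $G/H$ has order a power of $2$. A proper left invariant metric on a countable group is $d(g,h)=\|g^{-1}h\|$ for a proper norm ($\|g\|=0$ iff $g=1$, $\|g\|=\|g^{-1}\|$, subadditive, finite balls). An exact sequence $0\to K\overset{i}{\to}G\overset{\pi}{\to}Q\to0$ is coarsely split if there are proper left invariant metrics $d_K,d_G,d_Q$ and a coarse equivalence $f:(G,d_G)\to(K\oplus Q,d_K\oplus d_Q)$ ($\ell_1$ sum metric) such that $f\circ i$ is at bounded distance from $k\mapsto(k,0)$ and $\pi'\circ f$ is at bounded distance from $\pi$, $\pi'$ the projection onto $Q$. Coarse maps: for each $\delta$ there is $\epsilon$ with $d(x,y)\le\delta\Rightarrow d(f(x),f(y))\le\epsilon$; coarse equivalences: coarse maps with coarse inverses up to bounded distance. *)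

From HB Require Import structures.
From mathcomp Require Import all_boot all_order all_algebra.
From Stdlib Require Import Rdefinitions.
From mathcomp Require Import Rstruct.
Set Implicit Arguments. Unset Strict Implicit. Unset Printing Implicit Defensive.
Import GRing.Theory.

Local Open Scope ring_scope.

Definition inf_order (G : zmodType) (x : G) : Prop :=
  forall n : nat, is_true (0 < n)%nat -> x *+ n != 0.

Definition independent (G : zmodType) (S : G -> Prop) : Prop :=
  (forall x, S x -> x != 0) /\
  forall l : seq (int * G),
    uniq (map snd l) -> (forall p, p \in l -> S p.2) ->
    \sum_(p <- l) p.2 *~ p.1 = 0 -> forall p, p \in l -> p.2 *~ p.1 = 0.

Definition max_indep_inf (G : zmodType) (S : G -> Prop) : Prop :=
  [/\ independent S, (forall x, S x -> inf_order x) &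
      forall T : G -> Prop, (forall x, S x -> T x) -> independent T ->
        (forall x, T x -> inf_order x) -> forall x, T x -> S x].

Definition gen_subgroup (G : zmodType) (S : G -> Prop) (g : G) : Prop :=
  exists l : seq (int * G), (forall p, p \in l -> S p.2) /\
    g = \sum_(p <- l) p.2 *~ p.1.

(* Torsion-free rank (= dim_Q (G ⊗ Q)) is finite: independent systems of
   elements of infinite order have bounded size. *)
Definition finite_rank (G : zmodType) : Prop :=
  exists n : nat, forall l : seq G, uniq l ->
    independent (fun x => x \in l) -> (forall x, x \in l -> inf_order x) ->
    is_true (size l <= n)%nat.

Definition proper_norm (G : zmodType) (N : G -> R) : Prop :=
  (forall g, N g = 0 <-> g = 0) /\
  (forall g, N (- g) = N g) /\
  (forall g h, N (g + h) <= N g + N h) /\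
  (forall r : R, exists s : seq G, forall g, N g <= r -> g \in s).

Definition norm_dist (G : zmodType) (N : G -> R) (g h : G) : R := N (- g + h).

Definition sum_dist (A B : Type) (dA : A -> A -> R) (dB : B -> B -> R)
  (x y : A * B) : R := dA x.1 y.1 + dB x.2 y.2.

Definition coarse_map (X Y : Type) (dX : X -> X -> R) (dY : Y -> Y -> R)
  (f : X -> Y) : Prop :=
  forall delta : R, exists eps : R, forall x y, dX x y <= delta -> dY (f x) (f y) <= eps.

Definition bounded_distance (A Y : Type) (dY : Y -> Y -> R) (u v : A -> Y) : Prop :=
  exists C : R, forall a, dY (u a) (v a) <= C.

Definition coarse_equiv (X Y : Type) (dX : X -> X -> R) (dY : Y -> Y -> R)
  (f : X -> Y) : Prop :=
  coarse_map dX dY f /\ exists g : Y -> X, coarse_map dY dX g /\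
    bounded_distance dX (fun x => g (f x)) id /\
    bounded_distance dY (fun y => f (g y)) id.

Definition coarsely_split (K G Q : zmodType) (i : K -> G) (pi : G -> Q) : Prop :=
  exists (NK : K -> R) (NG : G -> R) (NQ : Q -> R),
    proper_norm NK /\ proper_norm NG /\ proper_norm NQ /\
    exists f : G -> K * Q,
      coarse_equiv (norm_dist NG) (sum_dist (norm_dist NK) (norm_dist NQ)) f /\
      bounded_distance (sum_dist (norm_dist NK) (norm_dist NQ))
        (fun k => f (i k)) (fun k => (k, 0)) /\
      bounded_distance (norm_dist NQ) (fun g => (f g).2) pi.

From HB Require Import structures.
From mathcomp Require Import all_boot all_order all_algebra.
From mathcomp Require Import zify lra.
From Stdlib Require Import Rdefinitions ClassicalEpsilon.
From mathcomp Require Import Rstruct.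
Import GRing.Theory Num.Theory Order.TTheory.
Local Open Scope ring_scope.
Set Implicit Arguments. Unset Strict Implicit.

(* Enumerate the maximal independent system as x_1, ..., x_n, so that H is free on
   them.  Every g in G has a multiple m g (m a power of 2) in H, hence rational
   coordinates; rounding them down gives a retraction rho : G -> H with
   rho (g + h) = rho g + h for h in H, whose additivity defect
   rho (g + y) - rho g - rho y is a combination of the x_j with coefficients
   in {0, 1}.  Then g |-> (rho g, pi g) is a bijection G -> H x G/H, with inverse
   (h, q) |-> h + s q for the section s q = g_q - rho g_q, and the additivity
   defects of both maps range over a finite set; for proper norms such maps are
   coarse. *)

Lemma divz_cross (a a' d d' : int) : 0 < d -> 0 < d' -> a * d' = a' * d ->
  divz a d = divz a' d'.
Proof.
move=> d0 d0' e.
by rewrite -(divzMpr (m := a) (d := d) d0') -(divzMpr (m := a') (d := d') d0) e [d * d']mulrC.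
Qed.

Lemma divzD_carry (a b d : int) : 0 < d ->
  0 <= divz (a + b) d - divz a d - divz b d <= 1.
Proof.
move=> d0; have dn0 : d != 0 by lia.
have := lez_floor a dn0; have := ltz_ceil a d0.
have := lez_floor b dn0; have := ltz_ceil b d0.
have := lez_floor (a + b) dn0; have := ltz_ceil (a + b) d0.
by move=> *; apply/andP; split; nia.
Qed.

Lemma inf_order_mulrz_eq0 (G : zmodType) (x : G) (m : int) :
  inf_order x -> x *~ m = 0 -> m = 0.
Proof.
move=> xinf; case: m => [[|m]|m] // /eqP.
all: by rewrite ?NegzE ?mulrNz ?oppr_eq0 -pmulrn (negPf (xinf m.+1 isT)).
Qed.

Section IntegerCombinations.
Variables (G : zmodType) (xs : seq G).
Local Notation n := (size xs).

Definition zcomb (v : 'I_n -> int) : G := \sum_(j < n) xs`_j *~ v j.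

Lemma eq_zcomb v w : v =1 w -> zcomb v = zcomb w.
Proof. by move=> vw; apply: eq_bigr => j _; rewrite vw. Qed.

Lemma zcomb0 : zcomb (fun=> 0) = 0.
Proof. by rewrite /zcomb big1 // => j _; rewrite mulr0z. Qed.

Lemma zcombD v w : zcomb (fun j => v j + w j) = zcomb v + zcomb w.
Proof. by rewrite /zcomb -big_split; apply: eq_bigr => j _; rewrite mulrzDr. Qed.

Lemma zcombB v w : zcomb (fun j => v j - w j) = zcomb v - zcomb w.
Proof.
rewrite /zcomb -sumrB; apply: eq_bigr => j _.
by rewrite mulrzDr mulrNz.
Qed.

Lemma zcombMn v m : zcomb (fun j => v j * m%:Z) = zcomb v *+ m.
Proof. by rewrite /zcomb -sumrMnl; apply: eq_bigr => j _; rewrite mulrzA -pmulrn. Qed.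

Definition zcomb_terms (v : 'I_n -> int) : seq (int * G) :=
  [seq (v j, xs`_j) | j <- enum 'I_n].

Lemma zcomb_termsE v : \sum_(p <- zcomb_terms v) p.2 *~ p.1 = zcomb v.
Proof. by rewrite big_map big_enum. Qed.

Lemma map_snd_zcomb_terms v : map snd (zcomb_terms v) = xs.
Proof. by rewrite -map_comp -[RHS](mkseq_nth 0) /mkseq -val_enum_ord -map_comp. Qed.

Lemma mem_zcomb_terms v p : p \in zcomb_terms v -> p.2 \in xs.
Proof. by move=> /mapP [j _ ->]; apply: mem_nth. Qed.

Variable S : G -> Prop.
Hypothesis memS : forall x, S x <-> x \in xs.

Lemma gen_subgroup_zcomb g : gen_subgroup S g <-> exists v, g = zcomb v.
Proof.
split=> [[l [lS {g}->]]|[v {g}->]]; last first.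
  exists (zcomb_terms v); split; last by rewrite zcomb_termsE.
  by move=> p /mem_zcomb_terms /memS.
elim: l lS => [|[a x] l IHl] lS; first by exists (fun=> 0); rewrite big_nil zcomb0.
rewrite big_cons; have [|v ->] := IHl; first by move=> p lp; apply: lS; rewrite in_cons lp orbT.
have : S x by apply: (lS (a, x)); rewrite in_cons eqxx.
move=> /memS; rewrite -index_mem => x_xs; pose j0 : 'I_n := Ordinal x_xs.
exists (fun j => (if j == j0 then a else 0) + v j).
rewrite zcombD /=; congr (_ + _).
rewrite /zcomb (bigD1 j0) //= eqxx big1 ?addr0 ?nth_index -?index_mem // => j /negPf ->.
by rewrite mulr0z.
Qed.

Hypothesis xs_uniq : uniq xs.
Hypothesis indS : independent S.
Hypothesis infS : forall x, S x -> inf_order x.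

Lemma zcomb_inj v w : zcomb v = zcomb w -> v =1 w.
Proof.
move=> vw j; apply/eqP; rewrite -subr_eq0; apply/eqP.
pose u j := v j - w j.
have u0 : \sum_(p <- zcomb_terms u) p.2 *~ p.1 = 0 by rewrite zcomb_termsE zcombB vw subrr.
have u_uniq : uniq (map snd (zcomb_terms u)) by rewrite map_snd_zcomb_terms.
have uS p : p \in zcomb_terms u -> S p.2 by move=> /mem_zcomb_terms /memS.
have uj : (u j, xs`_j) \in zcomb_terms u by apply: map_f; rewrite mem_enum.
apply: (inf_order_mulrz_eq0 (x := xs`_j)); first by apply/infS/memS/mem_nth.
exact: indS.2 _ u_uniq uS u0 _ uj.
Qed.

End IntegerCombinations.

Arguments zcomb {G} xs v.

Section FloorCoordinates.
Variables (G : zmodType) (xs : seq G).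
Local Notation n := (size xs).
Hypothesis zcomb_injective : forall v w, zcomb xs v = zcomb xs w -> v =1 w.
Hypothesis torsion :
  forall g, exists (m : nat) (v : 'I_n -> int), (0 < m)%nat /\ g *+ m = zcomb xs v.

Lemma torsion_witness g : exists mv : nat * {ffun 'I_n -> int},
  (0 < mv.1)%nat && (g *+ mv.1 == zcomb xs mv.2).
Proof.
have [m [v [m0 gv]]] := torsion g; exists (m, [ffun j => v j]).
by rewrite m0 gv /=; apply/eqP/eq_zcomb => j; rewrite ffunE.
Qed.

Definition floor_coord g (j : 'I_n) : int :=
  let mv := xchoose (torsion_witness g) in divz (mv.2 j) mv.1.

Lemma floor_coordE g m v : (0 < m)%nat -> g *+ m = zcomb xs v ->
  floor_coord g =1 fun j => divz (v j) m.
Proof.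
move=> m0 gv j; rewrite /floor_coord.
case/andP: (xchooseP (torsion_witness g)); set mv := xchoose _ => m'0 /eqP gv'.
apply: divz_cross; rewrite ?ltz_nat //.
apply: (zcomb_injective (v := fun j => mv.2 j * m) (w := fun j => v j * mv.1)).
by rewrite !zcombMn -gv -gv' -!mulrnA mulnC.
Qed.

Lemma floor_coord_shift g w :
  floor_coord (g + zcomb xs w) =1 fun j => floor_coord g j + w j.
Proof.
have [m [v [m0 gv]]] := torsion g.
have gwv : (g + zcomb xs w) *+ m = zcomb xs (fun j => w j * m + v j).
  by rewrite mulrnDl gv zcombD zcombMn addrC.
move=> j; rewrite (floor_coordE m0 gv) (floor_coordE m0 gwv) divzMDl 1?addrC //.
by rewrite eqz_nat -lt0n.
Qed.

Definition floor_proj g : G := zcomb xs (floor_coord g).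

Lemma floor_projD_zcomb g w : floor_proj (g + zcomb xs w) = floor_proj g + zcomb xs w.
Proof. by rewrite /floor_proj (eq_zcomb (floor_coord_shift g w)) zcombD. Qed.

Definition floor_defects : seq G :=
  codom (fun b : {ffun 'I_n -> bool} => zcomb xs (fun j => (b j : nat)%:Z)).

Lemma floor_proj_defect g y :
  floor_proj (g + y) - floor_proj g - floor_proj y \in floor_defects.
Proof.
have [m [v [m0 gv]]] := torsion g; have [m' [v' [m'0 yv]]] := torsion y.
have mm'0 : (0 < m * m')%nat by rewrite muln_gt0 m0.
have gv2 : g *+ (m * m') = zcomb xs (fun j => v j * m') by rewrite zcombMn -gv mulrnA.
have yv2 : y *+ (m * m') = zcomb xs (fun j => v' j * m).
  by rewrite zcombMn -yv -mulrnA mulnC.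
have gyv2 : (g + y) *+ (m * m') = zcomb xs (fun j => v j * m' + v' j * m).
  by rewrite mulrnDl gv2 yv2 zcombD.
pose c j := floor_coord (g + y) j - floor_coord g j - floor_coord y j.
have c01 j : 0 <= c j <= 1.
  rewrite /c (floor_coordE mm'0 gv2) (floor_coordE mm'0 yv2) (floor_coordE mm'0 gyv2).
  by apply: divzD_carry; rewrite ltz_nat.
have -> : floor_proj (g + y) - floor_proj g - floor_proj y =
    zcomb xs (fun j => ([ffun j => c j == 1] j : nat)%:Z).
  rewrite /floor_proj -!zcombB; apply: eq_zcomb => j; rewrite ffunE.
  by have := c01 j; rewrite -/(c j); case: eqP => [->|]; lia.
exact: codom_f.
Qed.

End FloorCoordinates.

Section ProperNorm.
Variables (A : zmodType) (N : A -> R).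
Hypothesis N_proper : proper_norm N.

Lemma pnorm0 : N 0 = 0.
Proof. exact/N_proper.1. Qed.

Lemma pnormN x : N (- x) = N x.
Proof. exact: N_proper.2.1. Qed.

Lemma pnormD x y : N (x + y) <= N x + N y.
Proof. exact: N_proper.2.2.1. Qed.

Lemma pnorm_ge0 x : 0 <= N x.
Proof. by have := pnormD x (- x); rewrite subrr pnorm0 pnormN; lra. Qed.

Lemma pnorm_ball r : exists s : seq A, forall x, N x <= r -> x \in s.
Proof. exact: N_proper.2.2.2. Qed.

Lemma norm_dist_xx x : norm_dist N x x = 0.
Proof. by rewrite /norm_dist addNr pnorm0. Qed.

Lemma pnorm_le_sum (T : eqType) (F : T -> A) (s : seq T) x :
  x \in s -> N (F x) <= \sum_(y <- s) N (F y).
Proof.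
by move=> xs; rewrite (big_rem _ xs) /= lerDl sumr_ge0 // => y _; apply: pnorm_ge0.
Qed.

End ProperNorm.

Definition pair_norm (K Q : zmodType) (NK : K -> R) (NQ : Q -> R) (z : K * Q) :=
  NK z.1 + NQ z.2.

Lemma pair_norm_proper (K Q : zmodType) (NK : K -> R) (NQ : Q -> R) :
  proper_norm NK -> proper_norm NQ -> proper_norm (pair_norm NK NQ).
Proof.
move=> NKp NQp; rewrite /pair_norm; split; [|split; [|split]].
- case=> k q /=; split=> [kq0|[-> ->]]; last by rewrite (pnorm0 NKp) (pnorm0 NQp) addr0.
  have := pnorm_ge0 NKp k; have := pnorm_ge0 NQp q => ? ?.
  have k0 : NK k = 0 by lra.
  have q0 : NQ q = 0 by lra.
  by rewrite (NKp.1 k).1 // (NQp.1 q).1.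
- by case=> k q /=; rewrite !pnormN.
- case=> k q [k' q'] /=; have := pnormD NKp k k'; have := pnormD NQp q q'; lra.
- move=> r; have [sK sKP] := pnorm_ball NKp r; have [sQ sQP] := pnorm_ball NQp r.
  exists [seq (k, q) | k <- sK, q <- sQ] => -[k q] /= kqr; apply: allpairs_f.
    by apply: sKP; have := pnorm_ge0 NQp q; lra.
  by apply: sQP; have := pnorm_ge0 NKp k; lra.
Qed.

Section CoarseMaps.
Variables (X Y : zmodType) (NX : X -> R) (NY : Y -> R).
Hypotheses (NX_proper : proper_norm NX) (NY_proper : proper_norm NY).

(* f (g + x) - f g = f x + defect, and x ranges over a ball of NX, which is finite. *)
Lemma coarse_map_of_defects (f : X -> Y) (D : seq Y) :
  (forall x y, f (x + y) - f x - f y \in D) ->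
  coarse_map (norm_dist NX) (norm_dist NY) f.
Proof.
move=> fD delta; have [s sP] := pnorm_ball NX_proper delta.
exists (\sum_(x <- s) NY (f x) + \sum_(d <- D) NY (id d)) => g h gh.
have -> : h = g + (- g + h) by rewrite addNKr.
set x := - g + h; have xs : x \in s by apply: sP.
rewrite /norm_dist.
have -> : - f g + f (g + x) = f x + (f (g + x) - f g - f x).
  by rewrite [f x + _]addrC subrK addrC.
have := pnormD NY_proper (f x) (f (g + x) - f g - f x).
have := pnorm_le_sum NY_proper f xs; have := pnorm_le_sum NY_proper id (fD g x).
lra.
Qed.

Lemma coarse_equiv_of_cancel (f : X -> Y) (f' : Y -> X) :
  coarse_map (norm_dist NX) (norm_dist NY) f ->
  coarse_map (norm_dist NY) (norm_dist NX) f' ->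
  cancel f f' -> cancel f' f ->
  coarse_equiv (norm_dist NX) (norm_dist NY) f.
Proof.
move=> fc f'c fK f'K; split=> //; exists f'; split=> //.
by split; exists 0 => z; rewrite ?fK ?f'K norm_dist_xx.
Qed.

End CoarseMaps.

Definition decide (P : Prop) : bool :=
  if excluded_middle_informative P then true else false.

Lemma decideP (P : Prop) : reflect P (decide P).
Proof. by rewrite /decide; case: excluded_middle_informative => p; constructor. Qed.

Lemma finite_sums (A : zmodType) (Y : seq A) (m : nat) : exists t : seq A,
  forall l : seq A, (size l <= m)%nat -> all (mem Y) l -> \sum_(x <- l) x \in t.
Proof.
elim: m => [|m [t tP]]; first by exists [:: 0] => -[|//] _ _; rewrite big_nil mem_seq1.
exists (0 :: [seq y + z | y <- Y, z <- t]) => -[|x l] /=; first by rewrite big_nil mem_head.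
move=> lm /andP [xY lY]; rewrite big_cons in_cons; apply/orP; right.
by apply: allpairs_f => //; apply: tP.
Qed.

Section WordNorm.
Variables (A : zmodType) (c : A -> nat).
Hypothesis c_inj : injective c.

(* Symmetric under x |-> -x, and only finitely many letters have weight below any bound. *)
Definition letter_weight (x : A) : nat := (c x + c (- x)).+1.

Definition spells (a : A) (m : nat) : Prop :=
  exists l : seq A, (\sum_(x <- l) letter_weight x)%nat = m /\ \sum_(x <- l) x = a.

Lemma ex_spells a : exists m, decide (spells a m).
Proof. by exists (letter_weight a); apply/decideP; exists [:: a]; rewrite !big_seq1. Qed.

Definition word_norm (a : A) : nat := ex_minn (ex_spells a).

Lemma spells_word_norm a : spells a (word_norm a).
Proof. by rewrite /word_norm; case: ex_minnP => m /decideP. Qed.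

Lemma word_norm_min a m : spells a m -> (word_norm a <= m)%nat.
Proof. by rewrite /word_norm; case: ex_minnP => k _ kmin /decideP /kmin. Qed.

Lemma spellsN a m : spells a m -> spells (- a) m.
Proof.
move=> [l [lm la]]; exists (map -%R l); rewrite !big_map sumrN la; split=> //.
by rewrite -lm; apply: eq_bigr => x _; rewrite /letter_weight opprK addnC.
Qed.

Lemma spellsD a b m k : spells a m -> spells b k -> spells (a + b) (m + k).
Proof. by move=> [l [<- <-]] [l' [<- <-]]; exists (l ++ l'); rewrite !big_cat. Qed.

Lemma word_norm_eq0 a : (word_norm a == 0%nat) = (a == 0).
Proof.
apply/eqP/eqP=> [a0|->]; last first.
  by apply/eqP; rewrite -leqn0; apply: word_norm_min; exists [::]; rewrite !big_nil.
have [[|x l] [lm <-]] := spells_word_norm a; first by rewrite big_nil.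
by move: lm; rewrite a0 big_cons.
Qed.

Lemma word_normN a : word_norm (- a) = word_norm a.
Proof.
apply/eqP; rewrite eqn_leq; apply/andP; split; apply: word_norm_min.
  exact/spellsN/spells_word_norm.
by have := spellsN (spells_word_norm (- a)); rewrite opprK.
Qed.

Lemma word_normD a b : (word_norm (a + b) <= word_norm a + word_norm b)%nat.
Proof. exact/word_norm_min/spellsD/spells_word_norm/spells_word_norm. Qed.

Lemma code_ball M : exists s : seq A, forall x, (c x < M)%nat -> x \in s.
Proof.
elim: M => [|M [s sP]]; first by exists [::].
case: (decideP (exists x, c x = M)) => [[y yM]|noM].
  exists (y :: s) => x; rewrite ltnS leq_eqVlt in_cons => /orP [/eqP xM|/sP ->].
    by rewrite (c_inj (etrans xM (esym yM))) eqxx.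
  by rewrite orbT.
exists s => x; rewrite ltnS leq_eqVlt => /orP [/eqP xM|/sP //].
by case: noM; exists x.
Qed.

Lemma word_norm_ball M : exists s : seq A, forall a, (word_norm a <= M)%nat -> a \in s.
Proof.
have [Y YP] := code_ball M.+1; have [t tP] := finite_sums Y M.
exists t => a aM; have [l [lw <-]] := spells_word_norm a.
have weight_le x : x \in l -> (letter_weight x <= word_norm a)%nat.
  by move=> xl; rewrite -lw (big_rem _ xl) leq_addr.
apply: tP; first by rewrite (leq_trans _ aM) // -lw -sum1_size leq_sum.
by apply/allP => x /weight_le xa; apply: YP; rewrite /letter_weight in xa; lia.
Qed.

Lemma word_norm_proper : proper_norm (fun a => (word_norm a)%:R : R).
Proof.
split; [|split; [|split]] => [a|a|a b|r] /=.
- split=> [/eqP|->]; first by rewrite (pnatr_eq0 R) word_norm_eq0 => /eqP.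
  by move: (word_norm_eq0 0); rewrite eqxx => /eqP ->.
- by rewrite word_normN.
- by rewrite -natrD ler_nat word_normD.
- have [s sP] := word_norm_ball (Num.bound `|r|).
  exists s => a ar; apply: sP; rewrite -(ler_nat R).
  apply: le_trans ar (le_trans (ler_norm r) (ltW (archi_boundP _))).
  exact: normr_ge0.
Qed.

End WordNorm.

Lemma exists_proper_norm (A : zmodType) (c : A -> nat) :
  injective c -> exists N : A -> R, proper_norm N.
Proof. by move=> c_inj; exists (fun a => (word_norm c a)%:R); apply: word_norm_proper. Qed.

Lemma addr3B (V : zmodType) (x1 x2 x3 y1 y2 y3 : V) :
  x1 + y1 - (x2 + y2) - (x3 + y3) = x1 - x2 - x3 + (y1 - y2 - y3).
Proof.
by rewrite !opprD (addrACA x1 y1 (- x2) (- y2)) (addrACA (x1 - x2) (y1 - y2) (- x3) (- y3)).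
Qed.

Lemma sub_independent (G : zmodType) (S T : G -> Prop) :
  (forall x, T x -> S x) -> independent S -> independent T.
Proof.
move=> TS [S0 Sind]; split=> [x /TS /S0 //|l l_uniq lT].
by apply: Sind => // p /lT /TS.
Qed.

Lemma finite_rank_enum (G : zmodType) (S : G -> Prop) :
  finite_rank G -> independent S -> (forall x, S x -> inf_order x) ->
  exists xs : seq G, uniq xs /\ forall x, S x <-> x \in xs.
Proof.
move=> [n rank_n] indS infS.
pose fits m := exists l : seq G, [/\ uniq l, size l = m & forall x, x \in l -> S x].
have fits0 : exists m, decide (fits m) by exists 0%nat; apply/decideP; exists [::].
have fits_le m : decide (fits m) -> (m <= n)%nat.
  move=> /decideP [l [l_uniq <- lS]]; apply: rank_n => // [|x /lS /infS //].
  exact: sub_independent indS.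
case: (ex_maxnP fits0 fits_le) => m /decideP [l [l_uniq l_size lS]] m_max.
exists l; split=> // x; split=> [Sx|/lS //]; apply: contraT => xNl.
have /m_max : decide (fits m.+1).
  apply/decideP; exists (x :: l); split=> /=; rewrite ?xNl ?l_size //.
  by move=> y; rewrite in_cons => /orP [/eqP ->|/lS].
by rewrite ltnn.
Qed.

Section SplittingByQuasiRetraction.
Variables (G : countZmodType) (K Q : zmodType).
Variables (i : {additive K -> G}) (pi : {additive G -> Q}) (rho : G -> G) (D : seq G).
Hypotheses (i_inj : injective i) (pi_surj : forall q, exists g, pi g = q).
Hypotheses (pi_i : forall k, pi (i k) = 0) (ker_pi : forall g, pi g = 0 -> exists k, g = i k).
Hypotheses (pi_rho : forall g, pi (rho g) = 0)
  (rhoD_ker : forall g h, pi h = 0 -> rho (g + h) = rho g + h)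
  (rho_defect : forall g y, rho (g + y) - rho g - rho y \in D).

Lemma lift_witness h : exists k, (pi h == 0) ==> (i k == h).
Proof. by case: eqP => [/ker_pi [k ->]|_]; [exists k; rewrite eqxx | exists 0]. Qed.

Let lift h : K := xchoose (lift_witness h).

Lemma liftK h : pi h = 0 -> i (lift h) = h.
Proof. by move=> /eqP pih; apply/eqP; apply: (implyP (xchooseP (lift_witness h))). Qed.

Lemma lift_i k : lift (i k) = k.
Proof. by apply: i_inj; rewrite liftK. Qed.

Lemma preimage_witness q : exists g, pi g == q.
Proof. by have [g <-] := pi_surj q; exists g. Qed.

Let pre q : G := xchoose (preimage_witness q).

Lemma preK : cancel pre pi.
Proof. by move=> q; apply/eqP/(xchooseP (preimage_witness q)). Qed.

Lemma pre_pi g : pi (pre (pi g) - g) = 0.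
Proof. by rewrite raddfB preK subrr. Qed.

Let rep g : G := g - rho g.

Lemma pi_rep g : pi (rep g) = pi g.
Proof. by rewrite raddfB pi_rho subr0. Qed.

Lemma repD_ker g h : pi h = 0 -> rep (g + h) = rep g.
Proof. by move=> pih; rewrite /rep rhoD_ker // opprD addrACA subrr addr0. Qed.

Lemma rho_rep g : rho (rep g) = 0.
Proof. by rewrite /rep rhoD_ker ?subrr // raddfN pi_rho oppr0. Qed.

Lemma rep_defect g y : rep (g + y) - rep g - rep y = - (rho (g + y) - rho g - rho y).
Proof. by rewrite /rep addr3B [g + y - g]addrC addKr subrr add0r !opprD !opprK. Qed.

Let split g : K * Q := (lift (rho g), pi g).
Let unsplit z : G := i z.1 + rep (pre z.2).

Lemma unsplitK : cancel split unsplit.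
Proof.
move=> g; rewrite /unsplit /= liftK //.
by rewrite -[pre _](addrNK g) [pre _ - g + g]addrC repD_ker ?pre_pi // /rep addrC subrK.
Qed.

Lemma splitK : cancel unsplit split.
Proof.
move=> [k q]; rewrite /split /unsplit /= addrC rhoD_ker // rho_rep add0r lift_i.
by rewrite raddfD pi_i addr0 pi_rep preK.
Qed.

Lemma split_defect g y :
  split (g + y) - split g - split y \in [seq (lift d, 0) | d <- D].
Proof.
have -> : split (g + y) - split g - split y =
    (lift (rho (g + y)) - lift (rho g) - lift (rho y), pi (g + y) - pi g - pi y) by [].
have -> : pi (g + y) - pi g - pi y = 0 by rewrite raddfD addrAC addrK subrr.
have -> : lift (rho (g + y)) - lift (rho g) - lift (rho y) = lift (rho (g + y) - rho g - rho y).
  by apply: i_inj; rewrite !raddfB !liftK // !raddfB !pi_rho !subrr.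
exact: map_f.
Qed.

Lemma unsplit_defect z z' :
  unsplit (z + z') - unsplit z - unsplit z' \in [seq - d | d <- D].
Proof.
case: z z' => [k q] [k' q']; rewrite /unsplit /= addr3B raddfD.
have -> : rep (pre (q + q')) = rep (pre q + pre q').
  rewrite -[pre (q + q')](addrNK (pre q + pre q')) addrC repD_ker //.
  by rewrite raddfB preK raddfD !preK subrr.
by rewrite [i k + _ - _]addrC addKr subrr add0r rep_defect map_f.
Qed.

Lemma coarsely_split_of_quasi_retraction : coarsely_split i pi.
Proof.
have pickle_inj : injective (@pickle G) := pcan_inj pickleK.
have [NG NGp] := exists_proper_norm pickle_inj.
have [NK NKp] := exists_proper_norm (inj_comp pickle_inj i_inj).
have [NQ NQp] := exists_proper_norm (inj_comp pickle_inj (can_inj preK)).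
have NKQp := pair_norm_proper NKp NQp.
exists NK, NG, NQ; do 3 split=> //; exists split.
have -> : sum_dist (norm_dist NK) (norm_dist NQ) = norm_dist (pair_norm NK NQ) by [].
split; [|split].
- apply: coarse_equiv_of_cancel unsplitK splitK => //.
    exact: coarse_map_of_defects split_defect.
  exact: coarse_map_of_defects unsplit_defect.
- exists (NK (- lift (rho 0))) => k; rewrite /split pi_i.
  have -> : lift (rho (i k)) = lift (rho 0) + k.
    apply: i_inj; rewrite raddfD !liftK ?pi_rho //.
    by rewrite -{1}[i k]add0r rhoD_ker.
  by rewrite /norm_dist /pair_norm /= opprD addrNK addNr (pnorm0 NQp) addr0.
- by exists 0 => g; rewrite /= (norm_dist_xx NQp).
Qed.

End SplittingByQuasiRetraction.

Unset Implicit Arguments. Set Strict Implicit.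

Theorem mainTheorem5 (G : countZmodType) (S : G -> Prop)
  (K Q : zmodType) (i : {additive K -> G}) (pi : {additive G -> Q}) :
  finite_rank G ->
  max_indep_inf S ->
  (forall g : G, exists k : nat, gen_subgroup S (g *+ (2 ^ k)%nat)) ->
  injective i ->
  (forall g : G, gen_subgroup S g <-> exists k : K, g = i k) ->
  (forall q : Q, exists g : G, pi g = q) ->
  (forall g : G, pi g = 0 <-> gen_subgroup S g) ->
  coarsely_split i pi.
Proof.
move=> rankG [indS infS _] even i_inj H_i pi_surj ker_pi.
have [xs [xs_uniq memS]] := finite_rank_enum rankG indS infS.
have H_zcomb := gen_subgroup_zcomb memS.
have torsion g : exists (m : nat) (v : 'I_(size xs) -> int),
    (0 < m)%nat /\ g *+ m = zcomb xs v.
  have [k /H_zcomb [v gv]] := even g.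
  by exists (2 ^ k)%nat, v; split=> //; rewrite lt0n; apply/eqP/Nat.pow_nonzero.
have zinj := zcomb_inj memS xs_uniq indS infS.
apply: (coarsely_split_of_quasi_retraction (rho := floor_proj torsion) (D := floor_defects xs)
  i_inj pi_surj).
- by move=> k; apply/ker_pi/H_i; exists k.
- by move=> g /ker_pi /H_i.
- by move=> g; apply/ker_pi/H_zcomb; eexists.
- move=> g h /ker_pi /H_zcomb [w ->]; exact: floor_projD_zcomb zinj torsion g w.
- exact: floor_proj_defect zinj torsion.
Qed.
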